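(* Let $n\ge4$, $a>1$, and let $f_a(\Gamma)$ be the closed curve parameterized for $\phi\in[0,2n\pi]$ by $$u(\phi)=-\Big(\tfrac{a+1}{n}\cos\phi-\tfrac{a+1}{n+1}\cos\big(\tfrac{n+1}{n}\phi\big)\Big)-1,\qquad v(\phi)=-\Big(\tfrac{a-1}{n}\sin\phi-\tfrac{a-1}{n+1}\sin\big(\tfrac{n+1}{n}\phi\big)\Big).$$ Then $f_a(\Gamma)$ meets the real axis to the right of its center $-1$ in exactly $\lfloor\frac{n+1}{2}\rfloor$ distinct points. If $n$ is even, each of these points is a double intersection (attained for two parameter values in $[0,2n\pi)$); if $n$ is odd, each is a double intersection except the outermost one, which is attained for exactly one parameter value ($\phi=n\pi$). *)

From Stdlib Require Import Reals Lra Lia List.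
Open Scope R_scope.

Definition u_curve (a : R) (n : nat) (phi : R) : R :=
  - ((a + 1) / INR n * cos phi
     - (a + 1) / (INR n + 1) * cos ((INR n + 1) / INR n * phi)) - 1.

Definition v_curve (a : R) (n : nat) (phi : R) : R :=
  - ((a - 1) / INR n * sin phi
     - (a - 1) / (INR n + 1) * sin ((INR n + 1) / INR n * phi)).

Definition hits (a : R) (n : nat) (x phi : R) : Prop :=
  0 <= phi < 2 * INR n * PI /\ v_curve a n phi = 0 /\ u_curve a n phi = x.

Definition double_point (a : R) (n : nat) (x : R) : Prop :=
  exists phi1 phi2, phi1 <> phi2 /\ hits a n x phi1 /\ hits a n x phi2 /\
    forall phi, hits a n x phi -> phi = phi1 \/ phi = phi2.

(* Put phi = n t. Then u = -(a+1) Re z(t) - 1 and v = -(a-1) Im z(t), where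
   z(t) = e^{int}/n - e^{i(n+1)t}/(n+1) = e^{int} (1/n - e^{it}/(n+1)).
   The second factor has positive real part, so n t minus the arctangent of its
   slope is a continuous argument of z(t); its derivative is a positive multiple
   of 1 - cos t, so it increases strictly from 0 to n pi on [0, pi]. The curve
   meets the real axis to the right of -1 exactly when z(t) is a negative real,
   i.e. when this argument is k pi with k odd, k <= n: once for t in [0, pi] and,
   by the symmetry z(2 pi - t) = conj z(t), once more in (pi, 2 pi) unless t = pi,
   i.e. k = n. Since |z(t)|^2 = 1/n^2 + 1/(n+1)^2 - 2 cos t / (n (n+1)) is strictly
   increasing on [0, pi], distinct k give distinct points and k = n gives the
   outermost one. *)
From Stdlib Require Import Reals Lra Lia List ZArith ClassicalEpsilon.
From Coquelicot Require Import Coquelicot.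
Open Scope R_scope.

Definition zre (N t : R) : R := cos (N * t) / N - cos ((N + 1) * t) / (N + 1).
Definition zim (N t : R) : R := sin (N * t) / N - sin ((N + 1) * t) / (N + 1).

(* z(t) = e^{iNt} (fac_re N t - i fac_im N t). *)
Definition fac_re (N t : R) : R := 1 / N - cos t / (N + 1).
Definition fac_im (N t : R) : R := sin t / (N + 1).

Definition zarg (N t : R) : R := N * t - atan (fac_im N t / fac_re N t).

Lemma one_le_INR (n : nat) : (1 <= n)%nat -> 1 <= INR n.
Proof. intro Hn. exact (le_INR 1 n Hn). Qed.

Section Argument.

Variable N : R.
Hypothesis N_ge_1 : 1 <= N.

Lemma fac_re_pos (t : R) : 0 < fac_re N t.
Proof.
  unfold fac_re. pose proof (COS_bound t).
  replace (1 / N - cos t / (N + 1)) with ((N + 1 - N * cos t) / (N * (N + 1)))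
    by (field; lra).
  apply Rdiv_lt_0_compat; nra.
Qed.

Lemma fac_norm2 (t : R) :
  fac_re N t ^ 2 + fac_im N t ^ 2
  = 1 / N ^ 2 + 1 / (N + 1) ^ 2 - 2 * cos t / (N * (N + 1)).
Proof.
  unfold fac_re, fac_im. pose proof (sin2_cos2 t) as E. unfold Rsqr in E.
  replace ((sin t / (N + 1)) ^ 2) with ((1 - cos t * cos t) / (N + 1) ^ 2)
    by (rewrite <- E; field; lra).
  field. lra.
Qed.

Lemma zarg_derivative (t : R) :
  derivable_pt_lim (zarg N) t
    ((2 * N + 1) * (1 - cos t) / (N * (N + 1) * (fac_re N t ^ 2 + fac_im N t ^ 2))).
Proof.
  pose proof (fac_re_pos t) as HA. pose proof (fac_norm2 t) as Hm.
  apply is_derive_Reals. unfold zarg. unfold fac_re, fac_im in *.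
  auto_derive.
  { repeat split; try lra; auto_derive; auto. }
  rewrite Hm.
  assert (Hs : sin t ^ 2 = 1 - cos t ^ 2) by (pose proof (sin2_cos2 t); unfold Rsqr in *; nra).
  assert (0 < N + 1 - N * cos t) by (pose proof (COS_bound t); nra).
  assert (0 < 1 / N ^ 2 + 1 / (N + 1) ^ 2 - 2 * cos t / (N * (N + 1)))
    by (rewrite <- Hm; nra).
  field_simplify; [rewrite Hs; field | |]; repeat split; nra.
Qed.

Lemma zarg_continuous : continuity (zarg N).
Proof. intro t. apply derivable_continuous_pt. eexists. apply zarg_derivative. Qed.

Lemma zarg_increasing (x y : R) : 0 <= x -> x < y -> y <= PI -> zarg N x < zarg N y.
Proof.
  intros Hx Hxy Hy.
  destruct (MVT_cor2 (zarg N) _ x y Hxy (fun c _ => zarg_derivative c)) as [c [Hc Hcxy]].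
  assert (cos c < 1) by (rewrite <- cos_0; apply cos_decreasing_1; lra).
  pose proof (fac_re_pos c).
  assert (0 < (2 * N + 1) * (1 - cos c)
              / (N * (N + 1) * (fac_re N c ^ 2 + fac_im N c ^ 2)))
    by (apply Rdiv_lt_0_compat; nra).
  nra.
Qed.

Lemma zarg_0 : zarg N 0 = 0.
Proof. unfold zarg, fac_im. rewrite sin_0, Rdiv_0_l, Rdiv_0_l, atan_0. ring. Qed.

Lemma zarg_PI : zarg N PI = N * PI.
Proof. unfold zarg, fac_im. rewrite sin_PI, Rdiv_0_l, Rdiv_0_l, atan_0. ring. Qed.

Lemma zarg_inj (x y : R) :
  0 <= x <= PI -> 0 <= y <= PI -> zarg N x = zarg N y -> x = y.
Proof.
  intros Hx Hy E. destruct (Rtotal_order x y) as [h | [h | h]]; [| exact h |].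
  - pose proof (zarg_increasing x y ltac:(lra) h ltac:(lra)). lra.
  - pose proof (zarg_increasing y x ltac:(lra) h ltac:(lra)). lra.
Qed.

Lemma zarg_bounds (t : R) : 0 <= t <= PI -> 0 <= zarg N t <= N * PI.
Proof.
  intros Ht. rewrite <- zarg_0 at 1. rewrite <- zarg_PI. split.
  - destruct (Req_dec t 0) as [-> | ]; [lra |]. apply Rlt_le, zarg_increasing; lra.
  - destruct (Req_dec t PI) as [-> | ]; [lra |]. apply Rlt_le, zarg_increasing; lra.
Qed.

Lemma zre_expand (t : R) : zre N t = cos (N * t) * fac_re N t + sin (N * t) * fac_im N t.
Proof.
  unfold zre, fac_re, fac_im. replace ((N + 1) * t) with (N * t + t) by ring.
  rewrite cos_plus. field. lra.
Qed.

Lemma zim_expand (t : R) : zim N t = sin (N * t) * fac_re N t - cos (N * t) * fac_im N t.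
Proof.
  unfold zim, fac_re, fac_im. replace ((N + 1) * t) with (N * t + t) by ring.
  rewrite sin_plus. field. lra.
Qed.

Lemma z_polar (t : R) :
  exists rho, 0 < rho /\ zre N t = rho * cos (zarg N t) /\ zim N t = rho * sin (zarg N t).
Proof.
  pose proof (fac_re_pos t) as HA.
  set (g := atan (fac_im N t / fac_re N t)).
  assert (Hcg : 0 < cos g)
    by (pose proof (atan_bound (fac_im N t / fac_re N t)); apply cos_gt_0; unfold g; lra).
  assert (Hsg : sin g = fac_im N t / fac_re N t * cos g).
  { pose proof (tan_atan (fac_im N t / fac_re N t)) as Ht. fold g in Ht.
    unfold tan in Ht. rewrite <- Ht. field. lra. }
  exists (fac_re N t / cos g). split; [apply Rdiv_lt_0_compat; assumption |].
  unfold zarg. fold g. rewrite cos_minus, sin_minus, Hsg, zre_expand, zim_expand.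
  split; field; lra.
Qed.

Lemma z_norm2 (t : R) :
  zre N t ^ 2 + zim N t ^ 2 = 1 / N ^ 2 + 1 / (N + 1) ^ 2 - 2 * cos t / (N * (N + 1)).
Proof.
  rewrite <- fac_norm2, zre_expand, zim_expand.
  pose proof (sin2_cos2 (N * t)) as E. unfold Rsqr in E.
  transitivity ((sin (N * t) * sin (N * t) + cos (N * t) * cos (N * t))
                * (fac_re N t ^ 2 + fac_im N t ^ 2)); [ring |].
  rewrite E. ring.
Qed.

End Argument.

Lemma zre_reflect (n : nat) (t : R) : zre (INR n) (2 * PI - t) = zre (INR n) t.
Proof.
  unfold zre. replace (INR n + 1) with (INR (S n)) by (rewrite S_INR; ring).
  replace (INR n * (2 * PI - t)) with (- (INR n * t) + 2 * INR n * PI) by ring.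
  replace (INR (S n) * (2 * PI - t)) with (- (INR (S n) * t) + 2 * INR (S n) * PI) by ring.
  rewrite !cos_period, !cos_neg. reflexivity.
Qed.

Lemma zim_reflect (n : nat) (t : R) : zim (INR n) (2 * PI - t) = - zim (INR n) t.
Proof.
  unfold zim. replace (INR n + 1) with (INR (S n)) by (rewrite S_INR; ring).
  replace (INR n * (2 * PI - t)) with (- (INR n * t) + 2 * INR n * PI) by ring.
  replace (INR (S n) * (2 * PI - t)) with (- (INR (S n) * t) + 2 * INR (S n) * PI) by ring.
  rewrite !sin_period, !sin_neg. unfold Rdiv. ring.
Qed.

Lemma cos_sin_odd_mult_PI (k : nat) :
  Nat.Odd k -> cos (INR k * PI) = -1 /\ sin (INR k * PI) = 0.
Proof.
  intros [m ->].
  replace (INR (2 * m + 1) * PI) with (PI + 2 * INR m * PI)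
    by (rewrite plus_INR, mult_INR; simpl; ring).
  rewrite cos_period, sin_period, cos_PI, sin_PI. split; reflexivity.
Qed.

Lemma cos_even_mult_PI (k : nat) : Nat.Even k -> cos (INR k * PI) = 1.
Proof.
  intros [m ->].
  replace (INR (2 * m) * PI) with (0 + 2 * INR m * PI) by (rewrite mult_INR; simpl; ring).
  rewrite cos_period, cos_0. reflexivity.
Qed.

Lemma zarg_odd_neg_axis (N t : R) (k : nat) :
  1 <= N -> Nat.Odd k -> zarg N t = INR k * PI -> zre N t < 0 /\ zim N t = 0.
Proof.
  intros HN Hk Harg. destruct (z_polar N HN t) as (rho & Hrho & Ere & Eim).
  rewrite Harg in Ere, Eim. destruct (cos_sin_odd_mult_PI k Hk) as [Hc Hs].
  rewrite Hc in Ere. rewrite Hs in Eim. lra.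
Qed.

Lemma neg_axis_zarg_odd (n : nat) (t : R) :
  (1 <= n)%nat -> 0 <= t <= PI -> zim (INR n) t = 0 -> zre (INR n) t < 0 ->
  exists k, Nat.Odd k /\ (k <= n)%nat /\ zarg (INR n) t = INR k * PI.
Proof.
  intros Hn Ht Him Hre. pose proof (one_le_INR n Hn) as HN. pose proof PI_RGT_0.
  destruct (z_polar (INR n) HN t) as (rho & Hrho & Ere & Eim).
  assert (Hs : sin (zarg (INR n) t) = 0) by (rewrite Him in Eim; nra).
  assert (Hc : cos (zarg (INR n) t) < 0) by (rewrite Ere in Hre; nra).
  destruct (sin_eq_0_0 _ Hs) as [z Hz].
  pose proof (zarg_bounds (INR n) HN t Ht) as Hb. rewrite Hz in Hb.
  assert (Hz0 : (0 <= z)%Z) by (apply le_IZR; nra).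
  destruct (Z_of_nat_complete z Hz0) as [k ->].
  rewrite <- INR_IZR_INZ in Hz, Hb.
  exists k. split; [| split; [apply INR_le; nra | exact Hz]].
  destruct (Nat.Even_or_Odd k) as [He | Ho]; [| exact Ho].
  rewrite Hz, cos_even_mult_PI in Hc by exact He. lra.
Qed.

(* Meaningful only for k <= n; otherwise epsilon returns an arbitrary value. *)
Definition crossing_param (n k : nat) : R :=
  epsilon (inhabits 0) (fun t => 0 <= t <= PI /\ zarg (INR n) t = INR k * PI).

Lemma crossing_param_spec (n k : nat) :
  (1 <= n)%nat -> (k <= n)%nat ->
  0 <= crossing_param n k <= PI /\ zarg (INR n) (crossing_param n k) = INR k * PI.
Proof.
  intros Hn Hk. pose proof (one_le_INR n Hn) as HN.
  unfold crossing_param. apply epsilon_spec.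
  assert (Hf : continuity (fun t => zarg (INR n) t - INR k * PI))
    by (apply continuity_minus; [apply zarg_continuous, HN | apply continuity_const; now intros]).
  pose proof PI_RGT_0. pose proof (le_INR _ _ Hk). pose proof (pos_INR k).
  destruct (IVT_cor _ 0 PI Hf ltac:(lra)) as [t [Ht Hft]].
  { rewrite zarg_0, zarg_PI.
    assert (0 <= INR k * PI * ((INR n - INR k) * PI))
      by (apply Rmult_le_pos; apply Rmult_le_pos; lra).
    nra. }
  exists t. split; [exact Ht | lra].
Qed.

Lemma crossing_param_unique (n k : nat) (t : R) :
  (1 <= n)%nat -> (k <= n)%nat -> 0 <= t <= PI -> zarg (INR n) t = INR k * PI ->
  t = crossing_param n k.
Proof.
  intros Hn Hk Ht E. destruct (crossing_param_spec n k Hn Hk) as [HT HTarg].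
  apply (zarg_inj (INR n) (one_le_INR n Hn)); [exact Ht | exact HT | congruence].
Qed.

Lemma crossing_param_last (n : nat) : (1 <= n)%nat -> crossing_param n n = PI.
Proof.
  intros Hn. symmetry. apply crossing_param_unique; [exact Hn | lia | | apply zarg_PI].
  pose proof PI_RGT_0. lra.
Qed.

Lemma crossing_param_interior (n k : nat) :
  (1 <= n)%nat -> Nat.Odd k -> (k < n)%nat -> 0 < crossing_param n k < PI.
Proof.
  intros Hn Hk Hkn. pose proof PI_RGT_0.
  destruct (crossing_param_spec n k Hn ltac:(lia)) as [HT Harg].
  assert (Hk1 : 1 <= INR k) by (apply one_le_INR; destruct Hk; lia).
  split.
  - destruct (Req_dec (crossing_param n k) 0) as [E | E]; [| lra].
    rewrite E, zarg_0 in Harg. nra.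
  - destruct (Req_dec (crossing_param n k) PI) as [E | E]; [| lra].
    rewrite E, zarg_PI in Harg.
    assert (INR n = INR k) by (apply Rmult_eq_reg_r with PI; lra).
    apply INR_eq in H0. lia.
Qed.

Lemma crossing_param_neg_axis (n k : nat) :
  (1 <= n)%nat -> Nat.Odd k -> (k <= n)%nat ->
  zre (INR n) (crossing_param n k) < 0 /\ zim (INR n) (crossing_param n k) = 0.
Proof.
  intros Hn Hk Hkn. apply (zarg_odd_neg_axis _ _ k (one_le_INR n Hn) Hk).
  apply crossing_param_spec; assumption.
Qed.

Lemma neg_axis_crossing_param (n : nat) (t : R) :
  (1 <= n)%nat -> 0 <= t <= PI -> zim (INR n) t = 0 -> zre (INR n) t < 0 ->
  exists k, Nat.Odd k /\ (k <= n)%nat /\ t = crossing_param n k.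
Proof.
  intros Hn Ht Him Hre.
  destruct (neg_axis_zarg_odd n t Hn Ht Him Hre) as (k & Hk & Hkn & Harg).
  exists k. split; [exact Hk | split; [exact Hkn |]].
  apply crossing_param_unique; assumption.
Qed.

Lemma zre_crossing_param_sq (n k : nat) :
  (1 <= n)%nat -> Nat.Odd k -> (k <= n)%nat ->
  zre (INR n) (crossing_param n k) ^ 2
  = 1 / INR n ^ 2 + 1 / (INR n + 1) ^ 2
    - 2 * cos (crossing_param n k) / (INR n * (INR n + 1)).
Proof.
  intros Hn Hk Hkn. rewrite <- (z_norm2 _ (one_le_INR n Hn)).
  destruct (crossing_param_neg_axis n k Hn Hk Hkn) as [_ ->]. ring.
Qed.

Lemma u_curve_zre (a : R) (n : nat) (phi : R) :
  (1 <= n)%nat -> u_curve a n phi = - (a + 1) * zre (INR n) (phi / INR n) - 1.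
Proof.
  intros Hn. pose proof (one_le_INR n Hn).
  unfold u_curve, zre. replace (INR n * (phi / INR n)) with phi by (field; lra).
  replace ((INR n + 1) * (phi / INR n)) with ((INR n + 1) / INR n * phi) by (field; lra).
  field. lra.
Qed.

Lemma v_curve_zim (a : R) (n : nat) (phi : R) :
  (1 <= n)%nat -> v_curve a n phi = - (a - 1) * zim (INR n) (phi / INR n).
Proof.
  intros Hn. pose proof (one_le_INR n Hn).
  unfold v_curve, zim. replace (INR n * (phi / INR n)) with phi by (field; lra).
  replace ((INR n + 1) * (phi / INR n)) with ((INR n + 1) / INR n * phi) by (field; lra).
  field. lra.
Qed.

Lemma hits_of_zim_0 (a : R) (n : nat) (t : R) :
  (1 <= n)%nat -> 0 <= t < 2 * PI -> zim (INR n) t = 0 ->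
  hits a n (- (a + 1) * zre (INR n) t - 1) (INR n * t).
Proof.
  intros Hn Ht Him. pose proof (one_le_INR n Hn).
  assert (E : INR n * t / INR n = t) by (field; lra).
  split; [| split].
  - split; nra.
  - rewrite v_curve_zim, E, Him by exact Hn. ring.
  - rewrite u_curve_zre, E by exact Hn. reflexivity.
Qed.

Definition crossing (a : R) (n k : nat) : R :=
  - (a + 1) * zre (INR n) (crossing_param n k) - 1.

Lemma crossing_gt_center (a : R) (n k : nat) :
  (1 <= n)%nat -> 1 < a -> Nat.Odd k -> (k <= n)%nat -> -1 < crossing a n k.
Proof.
  intros Hn Ha Hk Hkn. unfold crossing.
  destruct (crossing_param_neg_axis n k Hn Hk Hkn). nra.
Qed.

Lemma hits_crossing (a : R) (n k : nat) :
  (1 <= n)%nat -> Nat.Odd k -> (k <= n)%nat ->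
  hits a n (crossing a n k) (INR n * crossing_param n k).
Proof.
  intros Hn Hk Hkn. pose proof PI_RGT_0.
  destruct (crossing_param_spec n k Hn Hkn) as [HT _].
  apply hits_of_zim_0; [exact Hn | lra | apply crossing_param_neg_axis; assumption].
Qed.

Lemma hits_crossing_reflect (a : R) (n k : nat) :
  (1 <= n)%nat -> Nat.Odd k -> (k < n)%nat ->
  hits a n (crossing a n k) (INR n * (2 * PI - crossing_param n k)).
Proof.
  intros Hn Hk Hkn. pose proof (crossing_param_interior n k Hn Hk Hkn).
  destruct (crossing_param_neg_axis n k Hn Hk ltac:(lia)) as [_ Him].
  unfold crossing. rewrite <- zre_reflect.
  apply hits_of_zim_0; [exact Hn | lra |]. rewrite zim_reflect, Him. ring.
Qed.

Lemma hits_right_of_center (a x phi : R) (n : nat) :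
  (1 <= n)%nat -> 1 < a -> hits a n x phi -> -1 < x ->
  exists k, Nat.Odd k /\ (k <= n)%nat /\ x = crossing a n k /\
    (phi = INR n * crossing_param n k \/ phi = INR n * (2 * PI - crossing_param n k)).
Proof.
  intros Hn Ha (Hphi & Hv & Hu) Hx. pose proof (one_le_INR n Hn). pose proof PI_RGT_0.
  set (t := phi / INR n) in *.
  assert (Hphi_t : phi = INR n * t) by (unfold t; field; lra).
  assert (Ht : 0 <= t < 2 * PI).
  { rewrite Hphi_t in Hphi. split; nra. }
  rewrite v_curve_zim in Hv by exact Hn. rewrite u_curve_zre in Hu by exact Hn. fold t in Hv, Hu.
  assert (Him : zim (INR n) t = 0) by nra.
  assert (Hre : zre (INR n) t < 0) by nra.
  unfold crossing. destruct (Rle_lt_dec t PI) as [Hle | Hgt].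
  - destruct (neg_axis_crossing_param n t Hn ltac:(lra) Him Hre) as (k & Hk & Hkn & E).
    exists k. rewrite <- E. auto.
  - assert (Him' : zim (INR n) (2 * PI - t) = 0) by (rewrite zim_reflect; lra).
    assert (Hre' : zre (INR n) (2 * PI - t) < 0) by (rewrite zre_reflect; lra).
    destruct (neg_axis_crossing_param n (2 * PI - t) Hn ltac:(lra) Him' Hre') as (k & Hk & Hkn & E).
    exists k. rewrite <- E, zre_reflect.
    repeat split; auto. right. rewrite Hphi_t. f_equal. ring.
Qed.

Lemma crossing_inj (a : R) (n j k : nat) :
  (1 <= n)%nat -> 1 < a -> Nat.Odd j -> (j <= n)%nat -> Nat.Odd k -> (k <= n)%nat ->
  crossing a n j = crossing a n k -> j = k.
Proof.
  intros Hn Ha Hj Hjn Hk Hkn E. pose proof (one_le_INR n Hn). pose proof PI_RGT_0.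
  unfold crossing in E.
  assert (Ere : zre (INR n) (crossing_param n j) = zre (INR n) (crossing_param n k)) by nra.
  pose proof (zre_crossing_param_sq n j Hn Hj Hjn) as Sj.
  pose proof (zre_crossing_param_sq n k Hn Hk Hkn) as Sk.
  rewrite Ere, Sk in Sj.
  assert (Ecos : cos (crossing_param n k) = cos (crossing_param n j)).
  { assert (0 < INR n * (INR n + 1)) by nra.
    unfold Rdiv in Sj. apply Rmult_eq_reg_r with (2 * / (INR n * (INR n + 1)));
      [lra | apply Rgt_not_eq, Rmult_lt_0_compat, Rinv_0_lt_compat; lra]. }
  destruct (crossing_param_spec n j Hn Hjn) as [Tj Aj].
  destruct (crossing_param_spec n k Hn Hkn) as [Tk Ak].
  rewrite (cos_inj _ _ Tk Tj Ecos), Aj in Ak.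
  apply INR_eq, Rmult_eq_reg_r with PI; lra.
Qed.

Lemma crossing_le_last (a : R) (n k : nat) :
  (1 <= n)%nat -> 1 < a -> Nat.Odd n -> Nat.Odd k -> (k <= n)%nat ->
  crossing a n k <= crossing a n n.
Proof.
  intros Hn Ha Hno Hk Hkn. pose proof (one_le_INR n Hn).
  pose proof (zre_crossing_param_sq n k Hn Hk Hkn) as Sk.
  pose proof (zre_crossing_param_sq n n Hn Hno (le_n n)) as Sn.
  destruct (crossing_param_neg_axis n k Hn Hk Hkn) as [Rk _].
  destruct (crossing_param_neg_axis n n Hn Hno (le_n n)) as [Rn _].
  unfold crossing. rewrite crossing_param_last in * by exact Hn. rewrite cos_PI in Sn.
  assert (2 * -1 / (INR n * (INR n + 1))
          <= 2 * cos (crossing_param n k) / (INR n * (INR n + 1))).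
  { unfold Rdiv. apply Rmult_le_compat_r; [apply Rlt_le, Rinv_0_lt_compat; nra |].
    pose proof (COS_bound (crossing_param n k)). lra. }
  assert (zre (INR n) PI <= zre (INR n) (crossing_param n k)) by nra.
  nra.
Qed.

Lemma hits_last_iff (a phi : R) (n : nat) :
  (1 <= n)%nat -> 1 < a -> Nat.Odd n -> hits a n (crossing a n n) phi <-> phi = INR n * PI.
Proof.
  intros Hn Ha Hno. split.
  - intro Hh.
    destruct (hits_right_of_center a _ phi n Hn Ha Hh (crossing_gt_center a n n Hn Ha Hno (le_n n)))
      as (k & Hk & Hkn & E & Hphi).
    assert (k = n) by (apply (crossing_inj a n); auto).
    subst k.
    rewrite crossing_param_last in Hphi by exact Hn. destruct Hphi as [-> | ->]; ring.
  - intros ->. rewrite <- (crossing_param_last n Hn). apply hits_crossing; auto.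
Qed.

Lemma double_point_crossing (a : R) (n k : nat) :
  (1 <= n)%nat -> 1 < a -> Nat.Odd k -> (k < n)%nat -> double_point a n (crossing a n k).
Proof.
  intros Hn Ha Hk Hkn. pose proof (one_le_INR n Hn).
  pose proof (crossing_param_interior n k Hn Hk Hkn).
  exists (INR n * crossing_param n k), (INR n * (2 * PI - crossing_param n k)).
  split; [| split; [| split]].
  - intro E. apply Rmult_eq_reg_l in E; lra.
  - apply hits_crossing; [assumption .. | lia].
  - apply hits_crossing_reflect; assumption.
  - intros phi Hh.
    destruct (hits_right_of_center a _ phi n Hn Ha Hh (crossing_gt_center a n k Hn Ha Hk ltac:(lia)))
      as (j & Hj & Hjn & E & Hphi).
    assert (j = k) by (apply (crossing_inj a n); auto; lia).
    subst j. exact Hphi.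
Qed.

Definition crossings (a : R) (n : nat) : list R :=
  map (fun j => crossing a n (2 * j + 1)) (seq 0 ((n + 1) / 2)).

Lemma lt_half_succ_iff (n j : nat) : (j < (n + 1) / 2)%nat <-> (2 * j + 1 <= n)%nat.
Proof.
  pose proof (Nat.div_mod (n + 1) 2 ltac:(lia)).
  pose proof (Nat.mod_upper_bound (n + 1) 2 ltac:(lia)). lia.
Qed.

Lemma in_crossings (a x : R) (n : nat) :
  In x (crossings a n) <-> exists k, Nat.Odd k /\ (k <= n)%nat /\ x = crossing a n k.
Proof.
  unfold crossings. rewrite in_map_iff. split.
  - intros (j & <- & Hj). apply in_seq, proj2, lt_half_succ_iff in Hj.
    exists (2 * j + 1)%nat. repeat split; [exists j |]; auto.
  - intros (k & [j ->] & Hkn & ->). exists j. split; [reflexivity |].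
    apply in_seq. split; [lia |]. apply lt_half_succ_iff. exact Hkn.
Qed.

Lemma NoDup_crossings (a : R) (n : nat) : (1 <= n)%nat -> 1 < a -> NoDup (crossings a n).
Proof.
  intros Hn Ha. apply NoDup_map_NoDup_ForallPairs; [| apply seq_NoDup].
  intros i j Hi Hj E. apply in_seq, proj2, lt_half_succ_iff in Hi, Hj.
  assert (2 * i + 1 = 2 * j + 1)%nat
    by (apply (crossing_inj a n); auto; [exists i | exists j]; reflexivity).
  lia.
Qed.

Lemma length_crossings (a : R) (n : nat) : length (crossings a n) = ((n + 1) / 2)%nat.
Proof. unfold crossings. rewrite length_map, length_seq. reflexivity. Qed.

Theorem lemma5 (n : nat) (a : R) (hn : (4 <= n)%nat) (ha : 1 < a) :
  exists xs : list R,
    NoDup xs /\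
    length xs = ((n + 1) / 2)%nat /\
    (forall x, In x xs <-> (-1 < x /\ exists phi, hits a n x phi)) /\
    (Nat.Even n -> forall x, In x xs -> double_point a n x) /\
    (Nat.Odd n ->
       exists xm, In xm xs /\ (forall x, In x xs -> x <= xm) /\
         (forall phi, hits a n xm phi <-> phi = INR n * PI) /\
         (forall x, In x xs -> x <> xm -> double_point a n x)).
Proof.
  assert (Hn : (1 <= n)%nat) by lia.
  exists (crossings a n). split; [| split; [| split; [| split]]].
  - apply NoDup_crossings; assumption.
  - apply length_crossings.
  - intro x. rewrite in_crossings. split.
    + intros (k & Hk & Hkn & ->).
      split; [apply crossing_gt_center | eexists; apply hits_crossing]; assumption.
    + intros [Hx [phi Hh]].
      destruct (hits_right_of_center a x phi n Hn ha Hh Hx) as (k & Hk & Hkn & -> & _).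
      eauto.
  - intros Heven x Hx. apply in_crossings in Hx as (k & Hk & Hkn & ->).
    apply double_point_crossing; [assumption .. |].
    destruct (Nat.eq_dec k n) as [-> | ]; [| lia].
    destruct (Nat.Even_Odd_False n Heven Hk).
  - intros Hodd. exists (crossing a n n). split; [| split; [| split]].
    + apply in_crossings. eauto.
    + intros x Hx. apply in_crossings in Hx as (k & Hk & Hkn & ->).
      apply crossing_le_last; assumption.
    + intro phi. apply hits_last_iff; assumption.
    + intros x Hx Hne. apply in_crossings in Hx as (k & Hk & Hkn & ->).
      apply double_point_crossing; [assumption .. |].
      destruct (Nat.eq_dec k n) as [-> | ]; [contradiction | lia].
Qed.
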